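(* Let $N\geq 4$, $K\geq 2$, $1\leq l\leq K-1$, $K+1\leq r\leq N-1$ be integers, and for $1\leq k\leq N$ let $G_k:\mathbb{R}\to\mathbb{R}$ with $G_k\in L^1(\mathbb{R})$. (a) If $a_k>0$, $b_k\in\mathbb{R}$, $b_k\neq 0$ for $1\leq k\leq l$, then $N_{a,b,k}<\infty$. (b) If $a_k=0$, $b_k\in\mathbb{R}$, $b_k\neq0$ for $l+1\leq k\leq K$, and additionally $xG_k(x)\in L^1(\mathbb{R})$, then $N_{0,b,k}<\infty$ if and only if $\int_{\mathbb{R}}G_k(x)\,dx=0$. (c) If $a_k>0$ and $xG_k(x)\in L^1(\mathbb{R})$ for $K+1\leq k\leq r$, then $M_{a,k}<\infty$ if and only if $\int_{\mathbb{R}}G_k(x)e^{\mp i\sqrt{a_k}x}\,dx=0$ (for both signs). (d) If $a_k=0$ and $x^2G_k(x)\in L^1(\mathbb{R})$ for $r+1\leq k\leq N$, then $M_{0,k}<\infty$ if and only if $\int_{\mathbb{R}}G_k(x)\,dx=0$ and $\int_{\mathbb{R}}xG_k(x)\,dx=0$.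
   Context: Fourier transform: $\widehat{G_k}(p)=\frac{1}{\sqrt{2\pi}}\int_{\mathbb{R}}G_k(x)e^{-ipx}dx$. For constants $a_k\geq0$ and $b_k\in\mathbb{R}$, define $N_{a,b,k}=\max\Big\{\Big\|\frac{\widehat{G_k}(p)}{p^2-a_k-ib_kp}\Big\|_{L^\infty(\mathbb{R})},\Big\|\frac{p^2\widehat{G_k}(p)}{p^2-a_k-ib_kp}\Big\|_{L^\infty(\mathbb{R})}\Big\}$ and $M_{a,k}=\max\Big\{\Big\|\frac{\widehat{G_k}(p)}{p^2-a_k}\Big\|_{L^\infty(\mathbb{R})},\Big\|\frac{p^2\widehat{G_k}(p)}{p^2-a_k}\Big\|_{L^\infty(\mathbb{R})}\Big\}$; $N_{0,b,k}$ and $M_{0,k}$ denote these quantities when $a_k=0$. *)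

From HB Require Import structures.
From mathcomp Require Import all_boot all_order all_algebra.
From mathcomp Require Import all_classical all_reals all_analysis.
From mathcomp Require Import ess_sup_inf complex.
Set Implicit Arguments. Unset Strict Implicit. Unset Printing Implicit Defensive.
Import Order.TTheory GRing.Theory Num.Theory.
Import numFieldNormedType.Exports.
Local Open Scope classical_set_scope.
Local Open Scope ring_scope.
Local Open Scope complex_scope.

Section defs.
Variable R : realType.
Local Notation mu := (@lebesgue_measure R).

Definition L1 (G : R -> R) : Prop := mu.-integrable setT (fun x => (G x)%:E).

(* complex integral  \int_R G(x) e^{-i p x} dx, written out via e^{-ipx} = cos(px) - i sin(px) *)
Definition cint (G : R -> R) (p : R) : R[i] :=
  Complex (Rintegral mu setT (fun x => G x * cos (p * x)))
          (- Rintegral mu setT (fun x => G x * sin (p * x))).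

Definition fourier (G : R -> R) (p : R) : R[i] :=
  ((Num.sqrt (2 * pi))^-1)%:C * cint G p.

Definition Linf_norm (f : R -> R[i]) : \bar R :=
  ess_sup mu (fun p => (Normc.normc (f p))%:E).

Definition Nab (G : R -> R) (a b : R) : \bar R :=
  maxe (Linf_norm (fun p => fourier G p / ((p ^+ 2 - a)%:C - (b * p) *i)))
       (Linf_norm (fun p => (p ^+ 2)%:C * fourier G p / ((p ^+ 2 - a)%:C - (b * p) *i))).

Definition Ma (G : R -> R) (a : R) : \bar R :=
  maxe (Linf_norm (fun p => fourier G p / (p ^+ 2 - a)%:C))
       (Linf_norm (fun p => (p ^+ 2)%:C * fourier G p / (p ^+ 2 - a)%:C)).

End defs.

From HB Require Import structures.
From mathcomp Require Import all_boot all_order all_algebra.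
From mathcomp Require Import all_classical all_reals all_analysis.
From mathcomp Require Import ess_sup_inf complex.
From mathcomp Require Import ring lra zify measurable_realfun.
Import Order.TTheory GRing.Theory Num.Theory.
Import numFieldNormedType.Exports.
Local Open Scope classical_set_scope.
Local Open Scope ring_scope.
Local Open Scope complex_scope.
Set Implicit Arguments. Unset Strict Implicit. Unset Printing Implicit Defensive.

(* 2 pi |G^(p)|^2 = fcos(p)^2 + fsin(p)^2, where fcos(p) = int G(x) cos(px) dx and
   fsin(p) = int G(x) sin(px) dx.  Both are bounded by ||G||_1, are Lipschitz with
   constant ||xG||_1 when xG is integrable, and when x^2 G is integrable they agree with
   int G and p int xG up to p^2 ||x^2 G||_1.  Away from the real zeros of the
   denominator D, the two quotients |G^/D| and |p^2 G^/D| are then bounded by comparing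
   polynomials.  At a zero p0 of D they stay bounded exactly when G^ vanishes at p0 to
   the order of the zero, which these estimates turn into the moment conditions;
   otherwise |G^/D| >= c / (p - p0) just right of p0, on a set of positive measure. *)

Section elementary_inequalities.
Variable R : realType.

Lemma sqrD_le (x y u : R) : `|x| <= u -> `|y| <= u -> x ^+ 2 + y ^+ 2 <= 2 * u ^+ 2.
Proof. by rewrite !ler_norml => /andP[? ?] /andP[? ?]; nra. Qed.

Lemma sqr_ge_of_dist (x v e : R) : `|x - v| <= e -> 2 * e <= `|v| -> v ^+ 2 / 4 <= x ^+ 2.
Proof.
move=> xv ev; have vx : `|v| / 2 <= `|x|.
  by have := lerB_dist v x; rewrite distrC in xv; lra.
rewrite -(real_normK (num_real x)) -(real_normK (num_real v)).
by have := normr_ge0 v; nra.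
Qed.

Lemma quartic_dominates (a b : R) : 0 < a -> b != 0 ->
  exists K, forall p, 1 + (p ^+ 2) ^+ 2 <= K * ((p ^+ 2 - a) ^+ 2 + (b * p) ^+ 2).
Proof.
move=> a0 b0; have b2 : 0 < b ^+ 2 by rewrite exprn_even_gt0.
set D := fun p => (p ^+ 2 - a) ^+ 2 + (b * p) ^+ 2.
have [k k0 kD] : exists2 k, 0 < k & forall p, k <= D p.
  exists (Num.min (a ^+ 2 / 4) (b ^+ 2 * a / 2)).
    by rewrite lt_min !divr_gt0 ?exprn_gt0 // mulr_gt0.
  move=> p; rewrite /D ge_min exprMn; have D1 := sqr_ge0 (p ^+ 2 - a).
  have D2 := mulr_ge0 (ltW b2) (sqr_ge0 p).
  have [pa|pa] := leP (p ^+ 2) (a / 2); apply/orP; [left | right].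
  - have : a ^+ 2 / 4 <= (p ^+ 2 - a) ^+ 2.
      rewrite (_ : a ^+ 2 / 4 = (a / 2) ^+ 2); last by field.
      by rewrite -[in leRHS]sqrrN opprB ler_sqr ?nnegrE; lra.
    lra.
  - have : b ^+ 2 * (a / 2) <= b ^+ 2 * p ^+ 2 by rewrite ler_pM2l // ltW.
    rewrite mulrA; lra.
exists (2 + (1 + 2 * a ^+ 2) / k) => p; rewrite -/(D p).
have c0 : 0 <= 1 + 2 * a ^+ 2 by have := sqr_ge0 a; lra.
have cD : 1 + 2 * a ^+ 2 <= (1 + 2 * a ^+ 2) / k * D p.
  by rewrite mulrAC ler_pdivlMr // ler_wpM2l.
have : (p ^+ 2) ^+ 2 <= 2 * D p + 2 * a ^+ 2.
  by rewrite /D; have := sqr_ge0 (p ^+ 2 - 2 * a); have := sqr_ge0 (b * p); nra.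
rewrite mulrDl; lra.
Qed.

Lemma sqr_le_two_zeros (x p s A : R) : 0 < s ->
  `|x| <= `|p - s| * A -> `|x| <= `|p + s| * A ->
  s ^+ 2 * x ^+ 2 <= A ^+ 2 * (p ^+ 2 - s ^+ 2) ^+ 2.
Proof.
move=> s0 h1 h2; have x0 := normr_ge0 x.
have key : s * `|x| <= `|p ^+ 2 - s ^+ 2| * A.
  have -> : p ^+ 2 - s ^+ 2 = (p - s) * (p + s) by ring.
  rewrite normrM; have := normr_ge0 (p - s); have := normr_ge0 (p + s).
  have [p0|p0] := leP 0 p.
  - have : s <= `|p + s| by rewrite ger0_norm; lra.
    nra.
  - have : s <= `|p - s| by rewrite ler0_norm; lra.
    nra.
rewrite -(real_normK (num_real x)) -[(_ - _) ^+ 2](real_normK (num_real _)).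
have := mulr_ge0 (ltW s0) x0; nra.
Qed.
End elementary_inequalities.

Section real_lipschitz.
Variable R : realType.

Lemma ler_dist_derive (f df : R -> R) (u v L : R) :
  (forall x : R, is_derive x (1 : R) f (df x)) ->
  (forall x, `|x - v| <= `|u - v| -> `|df x| <= L) ->
  `|f u - f v| <= L * `|u - v|.
Proof.
move=> fd dfL.
have fc : forall a b : R, {within `[a, b], continuous f}.
  by move=> a b; apply: derivable_within_continuous => x _; exact: ex_derive.
have [uv|vu] := leP u v.
- have [c] := MVT_segment uv (fun x _ => fd x) (fc u v).
  rewrite in_itv /= distrC => /andP[uc cv] ->.
  rewrite normrM (distrC v) ler_wpM2r // dfL // !ler0_norm ?subr_le0 //; lra.
- have [c] := MVT_segment (ltW vu) (fun x _ => fd x) (fc v u).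
  rewrite in_itv /= => /andP[vc cu] ->.
  rewrite normrM ler_wpM2r // dfL // !ger0_norm ?subr_ge0 //; lra.
Qed.

Lemma lipschitz_continuous (f : R -> R) (k : R) :
  (forall p q, `|f p - f q| <= `|p - q| * k) -> continuous f.
Proof.
move=> fL p; apply/cvgrPdist_le => e e0; exists (e / (`|k| + 1)) => /=.
  by rewrite divr_gt0 // ltr_wpDl.
move=> q; rewrite /ball_ /= ltr_pdivlMr ?ltr_wpDl // mulrDr mulr1 => pq.
apply: le_trans (fL p q) (le_trans _ (ltW pq)).
by rewrite -[leLHS]addr0 lerD ?ler_wpM2l ?ler_norm.
Qed.

Lemma ler_dist_cos (u v : R) : `|cos u - cos v| <= `|u - v|.
Proof.
rewrite -[leRHS]mul1r; apply: (ler_dist_derive (df := fun x => - sin x)) => x _.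
by rewrite normrN sin_max.
Qed.

Lemma ler_dist_sin (u v : R) : `|sin u - sin v| <= `|u - v|.
Proof.
rewrite -[leRHS]mul1r; apply: (ler_dist_derive (df := @cos R)) => x _.
by rewrite cos_max.
Qed.

Lemma ler_norm_cosB1 (t : R) : `|cos t - 1| <= t ^+ 2.
Proof.
have := ler_dist_derive (u := t) (v := 0) (L := `|t|) (@is_derive_cos R).
rewrite cos0 !subr0 -expr2 real_normK ?num_real //; apply=> x; rewrite normrN => xt.
by apply: le_trans xt; have := ler_dist_sin x 0; rewrite sin0 !subr0.
Qed.

Lemma ler_norm_sinBid (t : R) : `|sin t - t| <= t ^+ 2.
Proof.
have := ler_dist_derive (f := fun x => sin x - x) (u := t) (v := 0) (L := `|t|)
  (fun x => is_deriveB (is_derive_sin x) (is_derive_id x 1)).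
rewrite sin0 !subr0 -expr2 real_normK ?num_real //; apply=> x xt.
by apply: le_trans xt; have := ler_dist_cos x 0; rewrite cos0 subr0.
Qed.
End real_lipschitz.

Section essential_sup.
Variable R : realType.
Local Notation mu := (@lebesgue_measure R).
Local Notation normc := (@Normc.normc R).

Lemma Linf_norm_lty (f : R -> R[i]) (M : R) :
  (forall p, normc (f p) <= M) -> (Linf_norm f < +oo)%E.
Proof.
move=> fM; apply: (le_lt_trans (ess_sup_ler mu (f := normc \o f) (y := M%:E) _)).
  by move=> p; rewrite lee_fin; exact: fM.
exact: ltry.
Qed.

Lemma Linf_norm_right_unbounded (f : R -> R[i]) (p0 : R) :
  (forall M, \forall p \near p0^'+, M < normc (f p)) -> ~ (Linf_norm f < +oo)%E.
Proof.
move=> fy finf; have [M [N [mN N0 sub]]] := ess_supr_bounded finf.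
(* [|f| > M] on a right neighbourhood of [p0], a set of positive measure. *)
have := fy M; rewrite near_withinE => -[e /= e0 Me].
have sN : `]p0, p0 + e[ `<=` N.
  move=> p /=; rewrite in_itv /= => /andP[p0p pe]; apply: sub => /=; apply/negP; rewrite -ltNge.
  by apply: Me => //=; rewrite ltr0_norm ?subr_lt0 //; lra.
have := lebesgue_measure_itv (R := R) `]p0, p0 + e[; rewrite /= lte_fin ltrDl e0.
rewrite (@subset_measure0 _ _ _ mu _ _ (measurable_itv _) mN sN N0) => /eqP.
by rewrite eq_sym -EFinD eqe addrAC subrr add0r gt_eqF.
Qed.
End essential_sup.

Section complex_quotient.
Variable R : realType.
Local Notation normc := (@Normc.normc R).

Definition sqnormc (z : R[i]) : R := complex.Re z ^+ 2 + complex.Im z ^+ 2.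

Lemma sqnormc_ge0 z : 0 <= sqnormc z.
Proof. by rewrite addr_ge0 ?sqr_ge0. Qed.

Lemma sqnormc_gt0 (z : R[i]) : z != 0 -> 0 < sqnormc z.
Proof.
case: z => x y nz; rewrite lt_def sqnormc_ge0 andbT /sqnormc /= paddr_eq0 ?sqr_ge0 //.
by rewrite !sqrf_eq0; apply: contra nz => /andP[/eqP-> /eqP->].
Qed.

Lemma sqnormc_realBi (x y : R) : sqnormc (x%:C - y *i) = x ^+ 2 + y ^+ 2.
Proof. by rewrite /sqnormc /=; ring. Qed.

Lemma sqnormc_real (x : R) : sqnormc x%:C = x ^+ 2.
Proof. by rewrite /sqnormc /=; ring. Qed.

Lemma normcE z : normc z = Num.sqrt (sqnormc z).
Proof. by case: z. Qed.

Lemma sqnormc_scale (k : R) z : sqnormc (k%:C * z) = k ^+ 2 * sqnormc z.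
Proof. by case: z => x y; rewrite /sqnormc /=; ring. Qed.

Lemma normc_div_le (w D : R[i]) K :
  sqnormc w <= K * sqnormc D -> normc (w / D) <= Num.sqrt K.
Proof.
move=> wD; rewrite Normc.normcM Normc.normcV !normcE.
have [D0|D0] := eqVneq (sqnormc D) 0; first by rewrite D0 sqrtr0 invr0 mulr0 sqrtr_ge0.
have D_gt0 : 0 < sqnormc D by rewrite lt_def D0 sqnormc_ge0.
have K0 : 0 <= K by rewrite -(pmulr_lge0 _ D_gt0) (le_trans (sqnormc_ge0 w)).
by rewrite ler_pdivrMr ?sqrtr_gt0 // -sqrtrM // ler_wsqrtr.
Qed.

Lemma normc_div_ge (w D : R[i]) m t : 0 < sqnormc D -> 0 <= t ->
  m * sqnormc D <= t ^+ 2 * sqnormc w -> Num.sqrt m <= t * normc (w / D).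
Proof.
move=> D_gt0 t0 mwD; rewrite Normc.normcM Normc.normcV !normcE mulrA.
rewrite ler_pdivlMr ?sqrtr_gt0 // mulrC -sqrtrM ?sqnormc_ge0 //.
by rewrite -(ger0_norm t0) -sqrtr_sqr -sqrtrM ?sqr_ge0 // ler_wsqrtr // mulrC.
Qed.

Lemma Linf_norm_div_lty (w D : R -> R[i]) K :
  (forall p, sqnormc (w p) <= K * sqnormc (D p)) ->
  (Linf_norm (fun p => (w p / D p)%R) < +oo)%E.
Proof. by move=> wD; apply: (Linf_norm_lty (M := Num.sqrt K)) => p; exact: normc_div_le. Qed.

Lemma Linf_norm_div_right_unbounded (w D : R -> R[i]) p0 m : 0 < m ->
  (\forall p \near p0^'+,
     0 < sqnormc (D p) /\ m * sqnormc (D p) <= (p - p0) ^+ 2 * sqnormc (w p)) ->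
  ~ (Linf_norm (fun p => (w p / D p)%R) < +oo)%E.
Proof.
move=> m0 wD; apply: (Linf_norm_right_unbounded (p0 := p0)) => M.
have sm0 : 0 < Num.sqrt m / (`|M| + 1) by rewrite divr_gt0 ?sqrtr_gt0 ?ltr_wpDl.
near=> p.
have [//|D_gt0 mwD] := near wD p.
have t0 : 0 < p - p0 by rewrite subr_gt0; near: p; exact: nbhs_right_gt.
have tM : p - p0 < Num.sqrt m / (`|M| + 1) by near: p; exact: nbhs_right_ltDr.
have := normc_div_ge D_gt0 (ltW t0) mwD.
move: tM; rewrite ltr_pdivlMr ?ltr_wpDl // => tM /(lt_le_trans tM).
rewrite ltr_pM2l // => /(lt_trans _); apply; rewrite (le_lt_trans (ler_norm M)) // ltrDl.
Unshelve. all: by end_near. Qed.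
End complex_quotient.

Section L1_integrals.
Variable R : realType.
Local Notation mu := (@lebesgue_measure R).
Local Notation Rint f := (Rintegral mu setT f).
Implicit Types f g h : R -> R.

Lemma L1_measurable f : L1 f -> measurable_fun setT f.
Proof. by move=> /(measurable_int mu) /measurable_EFinP. Qed.

Lemma L1_le f g : measurable_fun setT f -> (forall x, `|f x| <= `|g x|) -> L1 g -> L1 f.
Proof.
move=> mf fg g1; apply: le_integrable g1 => //; first exact/measurable_EFinP.
by move=> x _ /=; rewrite lee_fin.
Qed.

Lemma L1_mul_bounded f h : L1 f -> continuous h -> (forall x, `|h x| <= 1) ->
  L1 (fun x => f x * h x).
Proof.
move=> f1 hc h1; apply: (L1_le _ _ f1) => [|x].
  apply: measurable_funM; first exact: L1_measurable.
  exact: continuous_measurable_fun.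
by rewrite normrM -[leRHS]mulr1 ler_wpM2l.
Qed.

Lemma L1_moment1 g : L1 g -> L1 (fun x => x ^+ 2 * g x) -> L1 (fun x => x * g x).
Proof.
move=> g1 x2g1; apply: (L1_le (g := fun x => `|g x| + `|x ^+ 2 * g x|)) => [|x|].
- by apply: measurable_funM => //; exact: L1_measurable.
- rewrite [leRHS]ger0_norm ?addr_ge0 // !normrM.
  have := sqr_ge0 (`|x| - 1); have := normr_ge0 (g x); have := normr_ge0 x; nra.
- have := integrableD measurableT (integrable_norm g1) (integrable_norm x2g1).
  by apply: eq_integrable => // x _ /=; rewrite EFinD.
Qed.

Lemma ler_norm_Rintegral f g : L1 f -> L1 g -> (forall x, `|f x| <= g x) ->
  `|Rint f| <= Rint g.
Proof.
move=> f1 g1 fg; apply: le_trans (le_normr_Rintegral measurableT f1) _.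
by apply: le_Rintegral => //; exact: integrable_norm.
Qed.

Lemma ler_dist_Rintegral f1 f2 g c : L1 f1 -> L1 f2 -> L1 g ->
  (forall x, `|f1 x - f2 x| <= c * `|g x|) ->
  `|Rint f1 - Rint f2| <= c * Rint (fun x => `|g x|).
Proof.
move=> f11 f21 g1 fg; rewrite -RintegralB // -RintegralZl //; last exact: integrable_norm.
apply: ler_norm_Rintegral fg.
- have := integrableB measurableT f11 f21.
  by apply: eq_integrable => // x _ /=; rewrite EFinB.
- have := integrableZl measurableT c (integrable_norm g1).
  by apply: eq_integrable.
Qed.
End L1_integrals.

Section fourier_components.
Variable R : realType.
Local Notation mu := (@lebesgue_measure R).
Local Notation Rint f := (Rintegral mu setT f).
Variable G : R -> R.

Definition fcos p := Rint (fun x => G x * cos (p * x)).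
Definition fsin p := Rint (fun x => G x * sin (p * x)).

Lemma sqnormc_cint p : sqnormc (cint G p) = fcos p ^+ 2 + fsin p ^+ 2.
Proof. by rewrite /sqnormc /= sqrrN. Qed.

Lemma cint_eq0 p : cint G p = 0 <-> fcos p = 0 /\ fsin p = 0.
Proof.
split=> [[c0 /eqP]|[c0 s0]]; first by rewrite oppr_eq0 => /eqP.
by rewrite /cint -/(fcos p) -/(fsin p) c0 s0 oppr0.
Qed.

Lemma sqnormc_fourier p : sqnormc (fourier G p) = (2 * pi)^-1 * sqnormc (cint G p).
Proof.
rewrite sqnormc_scale exprVn sqr_sqrtr // mulr_ge0 //; exact: pi_ge0.
Qed.

Lemma fcos0 : fcos 0 = Rint G.
Proof. by rewrite /fcos; under eq_Rintegral do rewrite mul0r cos0 mulr1. Qed.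

Lemma fsin0 : fsin 0 = 0.
Proof.
rewrite /fsin; under eq_Rintegral do rewrite mul0r sin0 mulr0.
by rewrite Rintegral_cst // mul0r.
Qed.

Hypothesis G1 : L1 G.

Let continuous_cos_mul p : continuous (fun x : R => cos (p * x)).
Proof.
move=> x; apply: continuous_comp; last exact: continuous_cos.
by apply: continuousM => //; exact: cvg_cst.
Qed.

Let continuous_sin_mul p : continuous (fun x : R => sin (p * x)).
Proof.
move=> x; apply: continuous_comp; last exact: continuous_sin.
by apply: continuousM => //; exact: cvg_cst.
Qed.

Let L1_Gcos p : L1 (fun x => G x * cos (p * x)).
Proof. by apply: L1_mul_bounded G1 (continuous_cos_mul (p := p)) _ => x; rewrite cos_max. Qed.

Let L1_Gsin p : L1 (fun x => G x * sin (p * x)).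
Proof. by apply: L1_mul_bounded G1 (continuous_sin_mul (p := p)) _ => x; rewrite sin_max. Qed.

Lemma sqnormc_cint_le p : sqnormc (cint G p) <= 2 * Rint (fun x => `|G x|) ^+ 2.
Proof.
have bound (h : R -> R) : L1 (fun x => G x * h x) -> (forall x, `|h x| <= 1) ->
    `|Rint (fun x => G x * h x)| <= Rint (fun x => `|G x|).
  move=> Gh1 h1; apply: ler_norm_Rintegral Gh1 (integrable_norm G1) _ => x.
  by rewrite normrM -[leRHS]mulr1 ler_wpM2l.
rewrite sqnormc_cint; apply: sqrD_le.
- by apply: bound (L1_Gcos p) _ => x; exact: cos_max.
- by apply: bound (L1_Gsin p) _ => x; exact: sin_max.
Qed.

Hypothesis xG1 : L1 (fun x => x * G x).
Local Notation M1 := (Rint (fun x => `|x * G x|)).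

Lemma ler_dist_fcos p q : `|fcos p - fcos q| <= `|p - q| * M1.
Proof.
apply: ler_dist_Rintegral (L1_Gcos p) (L1_Gcos q) xG1 _ => x.
rewrite -mulrBr normrM (le_trans (ler_wpM2l (normr_ge0 _) (ler_dist_cos _ _))) //.
by rewrite -mulrBl !normrM mulrCA (mulrC `|G x|).
Qed.

Lemma ler_dist_fsin p q : `|fsin p - fsin q| <= `|p - q| * M1.
Proof.
apply: ler_dist_Rintegral (L1_Gsin p) (L1_Gsin q) xG1 _ => x.
rewrite -mulrBr normrM (le_trans (ler_wpM2l (normr_ge0 _) (ler_dist_sin _ _))) //.
by rewrite -mulrBl !normrM mulrCA (mulrC `|G x|).
Qed.

Lemma continuous_sqnormc_cint : continuous (fun p => sqnormc (cint G p)).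
Proof.
have fcos_cont := lipschitz_continuous ler_dist_fcos.
have fsin_cont := lipschitz_continuous ler_dist_fsin.
have -> : (fun p => sqnormc (cint G p)) = (fun p => fcos p * fcos p + fsin p * fsin p).
  by apply/funext => p; rewrite sqnormc_cint !expr2.
move=> p; apply: cvgD; apply: cvgM;
  [exact: fcos_cont | exact: fcos_cont | exact: fsin_cont | exact: fsin_cont].
Qed.

Hypothesis x2G1 : L1 (fun x => x ^+ 2 * G x).
Local Notation M2 := (Rint (fun x => `|x ^+ 2 * G x|)).

Lemma ler_dist_fcos0 p : `|fcos p - Rint G| <= p ^+ 2 * M2.
Proof.
apply: ler_dist_Rintegral (L1_Gcos p) G1 x2G1 _ => x.
rewrite -{2}[G x]mulr1 -mulrBr normrM.
rewrite (le_trans (ler_wpM2l (normr_ge0 _) (ler_norm_cosB1 _))) //.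
by rewrite exprMn normrM (ger0_norm (sqr_ge0 x)) mulrCA (mulrC `|G x|).
Qed.

Lemma ler_dist_fsin0 p : `|fsin p - p * Rint (fun x => x * G x)| <= p ^+ 2 * M2.
Proof.
rewrite -RintegralZl //; apply: ler_dist_Rintegral (L1_Gsin p) _ x2G1 _ => [|x].
  by have := integrableZl measurableT p xG1; apply: eq_integrable.
have -> : G x * sin (p * x) - p * (x * G x) = G x * (sin (p * x) - p * x) by ring.
rewrite normrM (le_trans (ler_wpM2l (normr_ge0 _) (ler_norm_sinBid _))) //.
by rewrite exprMn normrM (ger0_norm (sqr_ge0 x)) mulrCA (mulrC `|G x|).
Qed.
End fourier_components.

Section fourier_quotients.
Variable R : realType.

Definition fourier_quot_norm (G : R -> R) (D : R -> R[i]) : \bar R :=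
  maxe (Linf_norm (fun p => fourier G p / D p))
       (Linf_norm (fun p => (p ^+ 2)%:C * fourier G p / D p)).

Lemma NabE G a b :
  Nab G a b = fourier_quot_norm G (fun p => (p ^+ 2 - a)%:C - (b * p) *i).
Proof. by []. Qed.

Lemma MaE G a : Ma G a = fourier_quot_norm G (fun p => (p ^+ 2 - a)%:C).
Proof. by []. Qed.

Let inv2pi_gt0 : 0 < (2 * pi)^-1 :> R.
Proof. by rewrite invr_gt0 mulr_gt0 ?pi_gt0. Qed.

Lemma fourier_quot_norm_lty G D K1 K2 :
  (forall p, sqnormc (cint G p) <= K1 * sqnormc (D p)) ->
  (forall p, (p ^+ 2) ^+ 2 * sqnormc (cint G p) <= K2 * sqnormc (D p)) ->
  (fourier_quot_norm G D < +oo)%E.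
Proof.
move=> GD1 GD2; rewrite /fourier_quot_norm gt_max; apply/andP; split.
- apply: (Linf_norm_div_lty (K := (2 * pi)^-1 * K1)) => p.
  by rewrite sqnormc_fourier -mulrA ler_pM2l.
- apply: (Linf_norm_div_lty (w := fun p => (p ^+ 2)%:C * fourier G p)
           (K := (2 * pi)^-1 * K2)) => p.
  by rewrite sqnormc_scale sqnormc_fourier mulrCA -[in leRHS]mulrA ler_pM2l.
Qed.

Lemma fourier_quot_norm_right_unbounded G D p0 m : 0 < m ->
  (\forall p \near p0^'+, 0 < sqnormc (D p) /\
     m * sqnormc (D p) <= (p - p0) ^+ 2 * sqnormc (cint G p)) ->
  ~ (fourier_quot_norm G D < +oo)%E.
Proof.
move=> m0 GD; rewrite /fourier_quot_norm gt_max => /andP[+ _].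
apply: (Linf_norm_div_right_unbounded (m := (2 * pi)^-1 * m)); first exact: mulr_gt0.
near=> p; have [//|D_gt0 mGD] := near GD p; split => //.
by rewrite sqnormc_fourier -mulrA [leRHS]mulrCA ler_pM2l.
Unshelve. all: by end_near. Qed.

Lemma fourier_quot_norm_simple_zero G D p0 B :
  L1 G -> L1 (fun x => x * G x) -> cint G p0 != 0 -> 0 < B ->
  (\forall p \near p0^'+, 0 < sqnormc (D p) <= B * (p - p0) ^+ 2) ->
  ~ (fourier_quot_norm G D < +oo)%E.
Proof.
move=> G1 xG1 Gp0 B0 DB; set c := sqnormc (cint G p0).
have c0 : 0 < c by exact: sqnormc_gt0.
apply: (fourier_quot_norm_right_unbounded (p0 := p0) (m := c / 2 / B)).
  by rewrite !divr_gt0.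
have Gc : \forall p \near p0, c / 2 < sqnormc (cint G p).
  apply: (cvgr_gt _ (continuous_sqnormc_cint G1 xG1 (x := p0))).
  by rewrite ltr_pdivrMr // ltr_pMr // ltr1n.
near=> p; have /(_ _)/andP[//|D_gt0 DBp] := near DB p; split => //.
have Fp : c / 2 < sqnormc (cint G p) by near: p; apply: cvg_within.
rewrite mulrAC ler_pdivrMr // mulrAC.
have := sqr_ge0 (p - p0); nra.
Unshelve. all: by end_near. Qed.
End fourier_quotients.

Section moment_conditions.
Variable R : realType.
Local Notation mu := (@lebesgue_measure R).
Local Notation Rint f := (Rintegral mu setT f).
Variable G : R -> R.
Hypothesis G1 : L1 G.
Local Notation M0 := (Rint (fun x => `|G x|)).
Local Notation M1 := (Rint (fun x => `|x * G x|)).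
Local Notation M2 := (Rint (fun x => `|x ^+ 2 * G x|)).

Lemma Nab_lty a b : 0 < a -> b != 0 -> (Nab G a b < +oo)%E.
Proof.
move=> a0 b0; have [K KD] := quartic_dominates a0 b0.
have bound p : (1 + (p ^+ 2) ^+ 2) * sqnormc (cint G p) <=
    2 * M0 ^+ 2 * K * ((p ^+ 2 - a) ^+ 2 + (b * p) ^+ 2).
  rewrite [leRHS](_ : _ = K * ((p ^+ 2 - a) ^+ 2 + (b * p) ^+ 2) * (2 * M0 ^+ 2)).
    apply: ler_pM (sqnormc_ge0 _) (KD p) (sqnormc_cint_le G1 p).
    by rewrite addr_ge0 ?sqr_ge0.
  by ring.
rewrite NabE.
apply: (fourier_quot_norm_lty (K1 := 2 * M0 ^+ 2 * K) (K2 := 2 * M0 ^+ 2 * K)) => p;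
  rewrite sqnormc_realBi; apply: le_trans (bound p).
- by rewrite ler_peMl ?sqnormc_ge0 // lerDl sqr_ge0.
- by rewrite ler_wpM2r ?sqnormc_ge0 // lerDr.
Qed.

Lemma Nab0_lty_iff b : b != 0 -> L1 (fun x => x * G x) ->
  (Nab G 0 b < +oo)%E <-> Rint G = 0.
Proof.
move=> b0 xG1; have b2 : 0 < b ^+ 2 by rewrite exprn_even_gt0.
rewrite NabE; split=> [fin|IG0].
  apply/eqP; apply: contraPT fin => IG0.
  apply: (fourier_quot_norm_simple_zero (p0 := 0) (B := 1 + b ^+ 2) G1 xG1).
  - by apply: contra IG0 => /eqP/cint_eq0[]; rewrite fcos0 => ->.
  - lra.
  near=> p; rewrite sqnormc_realBi !subr0.
  have p0 : 0 < p by near: p; exact: nbhs_right_gt.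
  have p1 : p < 1 by near: p; exact: nbhs_right_lt ltr01.
  have p2 : 0 < p ^+ 2 by exact: exprn_gt0.
  have p21 : p ^+ 2 <= 1 by nra.
  by rewrite exprMn; apply/andP; split; nra.
apply: (fourier_quot_norm_lty (K1 := 2 * M1 ^+ 2 / b ^+ 2) (K2 := 2 * M0 ^+ 2)) => p;
  rewrite sqnormc_realBi subr0.
- have : sqnormc (cint G p) <= 2 * (`|p| * M1) ^+ 2.
    rewrite sqnormc_cint; apply: sqrD_le.
    + by have := ler_dist_fcos G1 xG1 p 0; rewrite fcos0 IG0 !subr0.
    + by have := ler_dist_fsin G1 xG1 p 0; rewrite fsin0 !subr0.
  move/le_trans; apply; rewrite exprMn real_normK ?num_real // mulrDr [(b * p) ^+ 2]exprMn.
  rewrite [X in _ + X]mulrA divfK ?gt_eqF //.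
  have : 0 <= 2 * M1 ^+ 2 / b ^+ 2 * (p ^+ 2) ^+ 2.
    by rewrite mulr_ge0 ?sqr_ge0 // divr_ge0 ?sqr_ge0 // mulr_ge0 ?sqr_ge0.
  lra.
- rewrite mulrC ler_pM ?sqnormc_ge0 ?sqr_ge0 //; first exact: sqnormc_cint_le.
  by rewrite lerDl sqr_ge0.
Unshelve. all: by end_near. Qed.

Lemma Ma_lty_cint_eq0 a z : 0 < a -> L1 (fun x => x * G x) -> `|z| = Num.sqrt a ->
  (Ma G a < +oo)%E -> cint G z = 0.
Proof.
move=> a0 xG1 zs fin; set s := Num.sqrt a in zs.
have s0 : 0 < s by rewrite sqrtr_gt0.
have sa : s ^+ 2 = a by rewrite sqr_sqrtr // ltW.
apply/eqP; apply: contraPT fin => Gz; rewrite MaE.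
apply: (fourier_quot_norm_simple_zero (p0 := z) (B := (2 * s + 1) ^+ 2) G1 xG1) => //.
  by rewrite exprn_gt0 //; lra.
near=> p; rewrite sqnormc_real.
have t0 : 0 < p - z by rewrite subr_gt0; near: p; exact: nbhs_right_gt.
have : p - z < Num.min 1 s by near: p; apply: nbhs_right_ltDr; rewrite lt_min ltr01.
rewrite lt_min => /andP[t1 ts].
have u0 : s < `|p + z| /\ `|p + z| <= 2 * s + 1.
  rewrite (_ : p + z = z *+ 2 + (p - z)); last by rewrite mulr2n; ring.
  have := lerB_normD (z *+ 2) (p - z); have := ler_normD (z *+ 2) (p - z).
  by rewrite normrMn zs (gtr0_norm t0); lra.
have -> : p ^+ 2 - a = (p - z) * (p + z) by rewrite -sa -zs real_normK ?num_real //; ring.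
rewrite exprMn -[(p + z) ^+ 2](real_normK (num_real _)); apply/andP; split.
  by rewrite mulr_gt0 ?exprn_gt0 //; lra.
by rewrite mulrC ler_wpM2r ?sqr_ge0 // ler_sqr ?nnegrE; lra.
Unshelve. all: by end_near. Qed.

Lemma sqnormc_cint_two_zeros s p : L1 (fun x => x * G x) -> 0 < s ->
  cint G s = 0 -> cint G (- s) = 0 ->
  s ^+ 2 * sqnormc (cint G p) <= 2 * M1 ^+ 2 * (p ^+ 2 - s ^+ 2) ^+ 2.
Proof.
move=> xG1 s0 /cint_eq0[c1 s1] /cint_eq0[c2 s2].
have two_zeros (f : R -> R) : f s = 0 -> f (- s) = 0 ->
    (forall p q, `|f p - f q| <= `|p - q| * M1) ->
    s ^+ 2 * f p ^+ 2 <= M1 ^+ 2 * (p ^+ 2 - s ^+ 2) ^+ 2.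
  move=> fs fNs fL; apply: sqr_le_two_zeros s0 _ _.
  - by have := fL p s; rewrite fs subr0.
  - by have := fL p (- s); rewrite fNs subr0 opprK.
rewrite sqnormc_cint mulrDr.
have := two_zeros _ c1 c2 (ler_dist_fcos G1 xG1).
have := two_zeros _ s1 s2 (ler_dist_fsin G1 xG1).
lra.
Qed.

Lemma Ma_lty_iff a : 0 < a -> L1 (fun x => x * G x) ->
  (Ma G a < +oo)%E <-> (cint G (Num.sqrt a) = 0 /\ cint G (- Num.sqrt a) = 0).
Proof.
move=> a0 xG1; have s0 : 0 < Num.sqrt a by rewrite sqrtr_gt0.
split=> [fin|[c1 c2]].
  by split; apply: Ma_lty_cint_eq0 a0 xG1 _ fin; rewrite ?normrN gtr0_norm.
have aF p := sqnormc_cint_two_zeros p xG1 s0 c1 c2; rewrite sqr_sqrtr ?ltW // in aF.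
rewrite MaE; apply: (fourier_quot_norm_lty (K1 := 2 * M1 ^+ 2 / a)
  (K2 := 4 * M0 ^+ 2 + 4 * a * M1 ^+ 2)) => p; rewrite sqnormc_real.
  by rewrite mulrAC ler_pdivlMr // mulrC.
have := aF p; have := sqnormc_cint_le G1 p; have := sqnormc_ge0 (cint G p).
have : (p ^+ 2) ^+ 2 <= 2 * (p ^+ 2 - a) ^+ 2 + 2 * a ^+ 2.
  by have := sqr_ge0 (p ^+ 2 - 2 * a); nra.
have := sqr_ge0 (p ^+ 2 - a); set D := (_ - a) ^+ 2; set F := sqnormc _.
nra.
Qed.

(* [fsin p] vanishes only to first order at 0 when [int x G(x) dx <> 0], against a
   double zero of the denominator. *)
Lemma Ma0_lty_moment1 : L1 (fun x => x ^+ 2 * G x) ->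
  (Ma G 0 < +oo)%E -> Rint (fun x => x * G x) = 0.
Proof.
move=> x2G1 fin; have xG1 := L1_moment1 G1 x2G1.
set J := Rint (fun x => x * G x); set m2 := M2.
have m2_ge0 : 0 <= m2 by exact: Rintegral_ge0.
apply/eqP; apply: contraPT fin => J0; rewrite MaE.
apply: (fourier_quot_norm_right_unbounded (p0 := 0) (m := J ^+ 2 / 4)).
  by rewrite divr_gt0 // exprn_even_gt0.
near=> p; rewrite sqnormc_real !subr0.
have p0 : 0 < p by near: p; exact: nbhs_right_gt.
have pJ : p * (2 * m2 + 1) < `|J|.
  rewrite -ltr_pdivlMr; last lra.
  by near: p; apply: nbhs_right_lt; rewrite divr_gt0 ?normr_gt0 //; lra.
have Sp : (p * J) ^+ 2 / 4 <= fsin G p ^+ 2.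
  apply: sqr_ge_of_dist (ler_dist_fsin0 G1 xG1 x2G1 p) _.
  rewrite -/J -/m2 normrM (gtr0_norm p0) expr2 -!mulrA mulrCA ler_pM2l //; lra.
split; first by rewrite !exprn_gt0.
rewrite sqnormc_cint; have := sqr_ge0 (fcos G p); have := sqr_ge0 p.
by move: Sp; rewrite exprMn; nra.
Unshelve. all: by end_near. Qed.

Lemma Ma0_lty_iff : L1 (fun x => x ^+ 2 * G x) ->
  (Ma G 0 < +oo)%E <-> (Rint G = 0 /\ Rint (fun x => x * G x) = 0).
Proof.
move=> x2G1; have xG1 := L1_moment1 G1 x2G1.
split=> [fin|[IG0 J0]].
  split; last exact: Ma0_lty_moment1.
  apply/eqP; apply: contraPT fin => IG0; rewrite MaE.
  apply: (fourier_quot_norm_simple_zero (p0 := 0) (B := 1) G1 xG1) => //.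
    by apply: contra IG0 => /eqP/cint_eq0[]; rewrite fcos0 => ->.
  near=> p; rewrite sqnormc_real !subr0 mul1r.
  have p0 : 0 < p by near: p; exact: nbhs_right_gt.
  have p1 : p < 1 by near: p; exact: nbhs_right_lt ltr01.
  have p2 : 0 < p ^+ 2 by exact: exprn_gt0.
  have p21 : p ^+ 2 <= 1 by nra.
  by rewrite exprn_gt0 //= expr2; nra.
rewrite MaE; apply: (fourier_quot_norm_lty (K1 := 2 * M2 ^+ 2) (K2 := 2 * M0 ^+ 2)) => p;
  rewrite sqnormc_real subr0.
- rewrite sqnormc_cint; apply: le_trans (sqrD_le (u := p ^+ 2 * M2) _ _) _.
  + by have := ler_dist_fcos0 G1 x2G1 p; rewrite IG0 subr0.
  + by have := ler_dist_fsin0 G1 xG1 x2G1 p; rewrite J0 mulr0 subr0.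
  + by rewrite [leRHS](_ : _ = 2 * (p ^+ 2 * M2) ^+ 2) //; ring.
- by rewrite mulrC ler_wpM2r ?sqr_ge0 //; exact: sqnormc_cint_le.
Unshelve. all: by end_near. Qed.
End moment_conditions.

Theorem lemmaA1 (R : realType) (N K l r : nat) (G : nat -> R -> R) (a b : nat -> R) :
  (4 <= N)%N -> (2 <= K)%N -> (1 <= l <= K - 1)%N -> (K + 1 <= r <= N - 1)%N ->
  (forall k, (1 <= k <= N)%N -> L1 (G k)) ->
  (* (a) *)
  (forall k, (1 <= k <= l)%N -> 0 < a k -> b k != 0 ->
     (Nab (G k) (a k) (b k) < +oo)%E) /\
  (* (b) *)
  (forall k, (l + 1 <= k <= K)%N -> a k = 0 -> b k != 0 ->
     L1 (fun x => x * G k x) ->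
     ((Nab (G k) 0 (b k) < +oo)%E <->
        Rintegral lebesgue_measure setT (G k) = 0)) /\
  (* (c) *)
  (forall k, (K + 1 <= k <= r)%N -> 0 < a k ->
     L1 (fun x => x * G k x) ->
     ((Ma (G k) (a k) < +oo)%E <->
        (cint (G k) (Num.sqrt (a k)) = 0 /\ cint (G k) (- Num.sqrt (a k)) = 0))) /\
  (* (d) *)
  (forall k, (r + 1 <= k <= N)%N -> a k = 0 ->
     L1 (fun x => x ^+ 2 * G k x) ->
     ((Ma (G k) 0 < +oo)%E <->
        (Rintegral lebesgue_measure setT (G k) = 0 /\
         Rintegral lebesgue_measure setT (fun x => x * G k x) = 0))).
Proof.
move=> _ _ /andP[l1 lK] /andP[Kr rN] G1.
split; [|split; [|split]] => k /andP[k_lb k_ub];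
  have G1k : L1 (G k) by apply: G1; apply/andP; split; lia.
- exact: Nab_lty.
- by move=> _; exact: Nab0_lty_iff.
- exact: Ma_lty_iff.
- by move=> _; exact: Ma0_lty_iff.
Qed.
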